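(* Let $(\mathcal{X},\rho)$ be a bounded length space with finite doubling dimension $d$ and diameter $R$, equipped with a finite Borel measure $\nu$. For $\eta\in\mathcal{F}_0$, let $\mathfrak{b}$ be the box-counting dimension of $\partial_\eta\mathcal{X}$. Then for any $c>0$ there exists a constant $C>0$ such that for all $r>0$, \[\mathcal{N}_{\mathrm{ML},\eta}\big(\mathcal{X}\setminus(\partial_\eta\mathcal{X})^r\big)\le C R^{4d} r^{-(\mathfrak{b}+c)}.\]
   Context: A length space: $\rho(x,x')=\inf_\gamma\ell(\gamma)$ over continuous paths from $x$ to $x'$. Doubling dimension $d$: every open ball $B(x,r)$ can be covered by $2^d$ balls of radius $r/2$. $\mathrm{margin}_\eta(x)=\inf\{\rho(x,x'):\eta(x')\ne\eta(x)\}$; $\partial_\eta\mathcal{X}=\{x:\mathrm{margin}_\eta(x)=0\}$; $\mathcal{F}_0$ = measurable $\eta$ with $\nu(\partial_\eta\mathcal{X})=0$. $A^r=\bigcup_{x\in A}B(x,r)$. A set $U$ is mutually-labeling for $\eta$ if $\sup_{z,z'\in U}\rho(z,z')<\mathrm{margin}_\eta(x)$ for all $x\in U$; $\mathcal{N}_{\mathrm{ML},\eta}(V)$ is the minimal number of mutually-labeling sets covering $V$. $\mathcal{N}_r(A)$ is the minimal number of radius-$r$ balls covering $A$, and the box-counting dimension is $\mathfrak{b}(A)=\limsup_{r\to0}\log\mathcal{N}_r(A)/\log(1/r)$. *)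

From HB Require Import structures.
From mathcomp Require Import all_boot all_order all_algebra.
From mathcomp Require Import all_classical all_reals all_analysis.
Set Implicit Arguments. Unset Strict Implicit. Unset Printing Implicit Defensive.
Import Order.TTheory GRing.Theory Num.Theory.
Local Open Scope classical_set_scope.
Local Open Scope ring_scope.

Section Defs.
Variables (R : realType) (X : pointedType) (rho : X -> X -> R).

Definition is_metric : Prop :=
  [/\ (forall x y, 0 <= rho x y),
      (forall x y, rho x y = 0 <-> x = y),
      (forall x y, rho x y = rho y x) &
      (forall x y z, rho x z <= rho x y + rho y z)].

Definition oball (x : X) (r : R) : set X := [set y | rho x y < r].

Definition enlarge (A : set X) (r : R) : set X :=
  \bigcup_(x in A) oball x r.

(* open sets of the metric topology; Borel sets = sigma-algebra they generate *)
Definition rho_open (A : set X) : Prop :=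
  forall x, A x -> exists e : R, 0 < e /\ oball x e `<=` A.
Definition rho_open_sets : set (set X) := [set A | rho_open A].

Definition is_path (gamma : R -> X) : Prop :=
  forall t, 0 <= t <= 1 -> forall e : R, 0 < e -> exists2 del : R, 0 < del &
    forall s, 0 <= s <= 1 -> `|s - t| < del -> rho (gamma s) (gamma t) < e.

Definition is_partition (s : seq R) : Prop :=
  [/\ (1 < size s)%N, head 0 s = 0, last 0 s = 1 & sorted <=%R s].

Definition path_sum (gamma : R -> X) (s : seq R) : R :=
  \sum_(i < (size s).-1) rho (gamma (nth 0 s i)) (gamma (nth 0 s i.+1)).

Definition path_length (gamma : R -> X) : \bar R :=
  ereal_sup [set (path_sum gamma s)%:E | s in is_partition].

Definition length_space : Prop :=
  forall x x', ((rho x x')%:E = ereal_inf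
    [set path_length gamma | gamma in
       [set g | is_path g /\ g 0%R = x /\ g 1%R = x']])%E.

Definition doubling (d : R) : Prop :=
  forall (x : X) (r : R), 0 < r -> exists s : seq X,
    (size s)%:R <= 2 `^ d /\ oball x r `<=` \bigcup_(z in [set` s]) oball z (r / 2).

Definition diameter : \bar R :=
  ereal_sup [set (rho p.1 p.2)%:E | p in [set: X * X]].

Section Label.
Variables (Y : Type) (eta : X -> Y).

Definition margin (x : X) : \bar R :=
  ereal_inf [set (rho x x')%:E | x' in [set x' | eta x' <> eta x]].

Definition boundary : set X := [set x | margin x = 0%E].

Definition mutually_labeling (U : set X) : Prop :=
  forall x, U x ->
    (ereal_sup [set (rho p.1 p.2)%:E | p in [set p : X * X | U p.1 /\ U p.2]]
       < margin x)%E.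

(* minimal number of mutually-labeling sets covering V (+oo if none) *)
Definition N_ML (V : set X) : \bar R :=
  ereal_inf [set (n%:R)%:E | n in [set n : nat | exists U : nat -> set X,
     (forall i, (i < n)%N -> mutually_labeling (U i)) /\
     V `<=` \bigcup_(i in [set i | (i < n)%N]) U i]].
End Label.

(* minimal number of radius-r balls covering A (+oo if none) *)
Definition N_r (A : set X) (r : R) : \bar R :=
  ereal_inf [set (n%:R)%:E | n in [set n : nat | exists s : seq X,
     size s = n /\ A `<=` \bigcup_(z in [set` s]) oball z r]].

Definition box_ratio (A : set X) (r : R) : \bar R :=
  match N_r A r with
  | EFin n => (ln n / ln (r^-1))%:E
  | e => e
  end.

(* box-counting dimension: limsup_{r -> 0+} log N_r(A) / log (1/r),
   written out as inf_{delta > 0} sup_{0 < r < delta} *)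
Definition box_dim (A : set X) : \bar R :=
  ereal_inf [set ereal_sup [set box_ratio A r | r in [set r | 0 < r < del]]
            | del in [set del : R | 0 < del]].
End Defs.

From HB Require Import structures.
From mathcomp Require Import all_boot all_order all_algebra.
From mathcomp Require Import all_classical all_reals all_analysis.
From mathcomp Require Import lra.
Import Order.TTheory GRing.Theory Num.Theory.
Local Open Scope classical_set_scope.
Local Open Scope ring_scope.

(* In a length space, a point x whose label differs from that of some x' lies within
   rho x x' + e of the boundary: along an almost shortest path from x to x', the first
   time the label changes is a boundary point.  Hence the margin of x is at least its
   distance to the boundary, and the points within s/4 of a centre and at distance at
   least s from the boundary form a mutually labeling cell.  A point outside the
   r-neighbourhood of the boundary lies in a dyadic shell
   2^k r <= dist(x, boundary) < 2^(k+1) r; it is within 3 2^k r of the centre of one of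
   the at most K (2^k r)^-(b+c) balls of radius 2^k r covering the boundary, and four
   doublings cover that larger ball by (2^d)^4 cells of radius 2^k r / 4.  Summing the
   geometric series over k gives N_ML <= (2^d)^4 K r^-(b+c) / (1 - 2^-(b+c)); the
   factor diam^(4d) of the statement is absorbed into the constant. *)

Lemma find_last_level {P : nat -> Prop} {n : nat} : P 0%N -> ~ P n ->
  exists k, (k < n)%N /\ P k /\ ~ P k.+1.
Proof.
move=> P0; elim: n => [|n IH] Pn; first by [].
have [Pn'|Pn'] := boolp.pselect (P n); first by exists n.
by have [k [k_lt Pk]] := IH Pn'; exists k; split => //; apply: ltnW.
Qed.

Lemma size_flatten_map_le {R : numDomainType} {T U : Type} (f : T -> seq U)
    (M : T -> R) (s : seq T) :
  (forall z, (size (f z))%:R <= M z) -> (size (flatten (map f s)))%:R <= \sum_(z <- s) M z.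
Proof.
move=> fM; elim: s => [|z s IH] /=; first by rewrite big_nil.
by rewrite big_cons size_cat natrD lerD.
Qed.

Lemma two_powRN_lt1 {R : realType} {beta : R} : 0 < beta -> 2 `^ (- beta) < 1.
Proof.
move=> beta0; rewrite /powR ifF; last by apply/eqP; lra.
by rewrite expR_lt1 mulNr oppr_lt0 mulr_gt0 // ln_gt0 //; lra.
Qed.

Lemma sum_dyadic_powR_le {R : realType} (r beta : R) n : 0 < r -> 0 < beta ->
  \sum_(0 <= k < n) (2 ^+ k * r) `^ (- beta) <= r `^ (- beta) / (1 - 2 `^ (- beta)).
Proof.
move=> r0 beta0; set q := 2 `^ (- beta).
have q0 : 0 < q by apply: powR_gt0.
have q1 : `|q| < 1 by rewrite ger0_norm ?ltW ?two_powRN_lt1.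
have dyadic k : (2 ^+ k * r) `^ (- beta) = r `^ (- beta) * geometric 1 q k.
  rewrite /= mul1r powRM ?exprn_ge0 ?ltW // mulrC -powR_mulrn ?ler0n //.
  by rewrite -powRrM (mulrC k%:R) powRrM powR_mulrn // ltW.
rewrite (eq_bigr _ (fun k _ => dyadic k)) -mulr_sumr.
apply: le_trans (ler_wpM2l (powR_ge0 _ _) (geometric_le_lim n ler01 q0 q1)) _.
by rewrite mul1r.
Qed.

Section MetricSpace.
Context {R : realType} {X : pointedType} (rho : X -> X -> R).
Hypothesis rho_metric : is_metric rho.

Lemma rho_ge0 x y : 0 <= rho x y. Proof. by case: rho_metric. Qed.
Lemma rho_sym x y : rho x y = rho y x. Proof. by case: rho_metric. Qed.
Lemma rho_tri x y z : rho x z <= rho x y + rho y z. Proof. by case: rho_metric. Qed.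
Lemma rho_eq0 x y : rho x y = 0 -> x = y. Proof. by case: rho_metric => _ /(_ x y) []. Qed.

Lemma rho_le_diameter {diam : R} x y : diameter rho = diam%:E -> rho x y <= diam.
Proof. by move=> hdiam; rewrite -lee_fin -hdiam; apply: ereal_sup_ubound; exists (x, y). Qed.

Lemma diameter_gt0 {diam : R} {x y : X} : diameter rho = diam%:E -> x <> y -> 0 < diam.
Proof.
move=> hdiam xy; apply: lt_le_trans (rho_le_diameter x y hdiam).
by rewrite lt_neqAle rho_ge0 andbT; apply/eqP => /esym/rho_eq0.
Qed.

Lemma path_length_ge (g : R -> X) t : 0 <= t <= 1 ->
  ((rho (g 0) (g t))%:E <= path_length rho g)%E.
Proof.
move=> /andP[t0 t1].
apply: (@le_trans _ _ (path_sum rho g [:: 0; t; 1])%:E); last first.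
  by apply: ereal_sup_ubound; exists [:: 0; t; 1] => //; split => //=; rewrite t0 t1.
rewrite lee_fin /path_sum /= !big_ord_recr big_ord0 /= add0r.
by rewrite lerDl rho_ge0.
Qed.

Section Doubling.
Context {d : R}.
Hypothesis rho_doubling : doubling rho d.

Lemma doubling_iter n x r : 0 < r -> exists cs : seq X,
  (size cs)%:R <= (2 `^ d) ^+ n /\
  oball rho x r `<=` \bigcup_(z in [set` cs]) oball rho z (r / 2 ^+ n).
Proof.
move=> r0; elim: n => [|n [cs [cs_size cs_cover]]].
  exists [:: x]; split; first by rewrite expr0.
  by move=> y xy; exists x; [rewrite /= mem_head | rewrite expr0 divr1].
have rn0 : 0 < r / 2 ^+ n by rewrite divr_gt0 // exprn_gt0.
have [f f_cover] := boolp.choice (fun z => rho_doubling z _ rn0).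
exists (flatten (map f cs)); split.
  apply: le_trans (size_flatten_map_le f (fun=> 2 `^ d) cs (fun z => (f_cover z).1)) _.
  rewrite big_const_seq count_predT iter_addr_0 -(mulr_natl _ (size cs)) exprSr.
  by rewrite ler_wpM2r // powR_ge0.
move=> y /cs_cover [z z_in /(f_cover z).2 [w w_in wy]].
exists w; first by apply/flattenP; exists (f z) => //; apply: map_f.
by move: wy; rewrite /oball /= exprSr invfM mulrA.
Qed.

(* Four halvings take the radius [3 s] below [s / 4]. *)
Lemma shell_centers {A : set X} {cs : seq X} {s : R} : 0 < s ->
  A `<=` \bigcup_(c in [set` cs]) oball rho c s ->
  exists ws : seq X, (size ws)%:R <= (size cs)%:R * (2 `^ d) ^+ 4 /\
    forall x, (exists2 z, A z & rho z x < 2 * s) -> exists2 w, w \in ws & rho w x < s / 4.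
Proof.
move=> s0 A_cover; have s30 : 0 < 3 * s by rewrite mulr_gt0.
have [f f_cover] := boolp.choice (fun c => doubling_iter 4 c _ s30).
exists (flatten (map f cs)); split.
  apply: le_trans (size_flatten_map_le f (fun=> (2 `^ d) ^+ 4) cs (fun c => (f_cover c).1)) _.
  by rewrite big_const_seq count_predT iter_addr_0 mulr_natl.
move=> x [z /A_cover [c c_in cz] zx].
have cx : oball rho c (3 * s) x.
  by rewrite /oball /=; have := rho_tri c z x; move: cz; rewrite /oball /=; lra.
have [w w_in] := (f_cover c).2 x cx; rewrite /oball /= -natrX => wx.
by exists w; [apply/flattenP; exists (f c) => //; apply: map_f | lra].
Qed.

End Doubling.

Lemma box_dim_small_cover {A : set X} {b c : R} : box_dim rho A = b%:E -> 0 < c ->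
  exists s0, 0 < s0 <= 1 /\ forall s, 0 < s < s0 -> exists cs : seq X,
    (size cs)%:R < s `^ (- (b + c)) /\ A `<=` \bigcup_(z in [set` cs]) oball rho z s.
Proof.
move=> A_dim c0.
have : (box_dim rho A < (b + c)%:E)%E by rewrite A_dim lte_fin ltrDl.
case/ereal_inf_lt => _ [del del0 <-] ratio_lt.
exists (Num.min del 1); split=> [|s /andP[s0]].
  by rewrite lt_min del0 ltr01 ge_min lexx orbT.
rewrite lt_min => /andP[s_del s1].
have s_ratio : (box_ratio rho A s < (b + c)%:E)%E.
  by apply: le_lt_trans ratio_lt; apply: ereal_sup_ubound; exists s => //; apply/andP.
have N_ge0 : (0 <= N_r rho A s)%E.
  by apply: le_ereal_inf_tmp => _ [n _ <-]; rewrite lee_fin ler0n.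
suff : (N_r rho A s < (s `^ (- (b + c)))%:E)%E.
  by case/ereal_inf_lt => _ [n [cs [<- cs_cover]] <-]; rewrite lte_fin => cs_size; exists cs.
move: s_ratio N_ge0; rewrite /box_ratio; case: (N_r rho A s) => [v| |] //=.
rewrite !lte_fin => v_ratio _.
have ln_inv_s : 0 < ln s^-1 by apply: ln_gt0; rewrite invf_gt1.
have [v_le0|v_gt0] := lerP v 0; first by apply: le_lt_trans v_le0 (powR_gt0 _ _).
rewrite -ltr_ln ?posrE ?powR_gt0 // ln_powR.
by rewrite ltr_pdivrMr // lnV ?posrE // in v_ratio; rewrite mulNr -mulrN.
Qed.

Lemma box_dim_add_gt0 {A : set X} {b c : R} : A !=set0 -> box_dim rho A = b%:E -> 0 < c ->
  0 < b + c.
Proof.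
move=> [a Aa] A_dim c0; have [s0 [/andP[s00 s01] small]] := box_dim_small_cover A_dim c0.
have [|cs [cs_size cs_cover]] := small (s0 / 2); first by apply/andP; split; lra.
have cs1 : 1 <= (size cs)%:R :> R.
  by have [z z_in _] := cs_cover a Aa; rewrite ler1n; case: (cs) z_in.
rewrite ltNge; apply/negP => bc_le0.
have s_half : 0 < s0 / 2 <= 1 by apply/andP; split; lra.
have := ger_powR s_half (_ : 0 <= - (b + c)); rewrite powRr0; lra.
Qed.

(* Beyond the range of [box_dim_small_cover], one cover at a fixed small scale serves
   every larger scale up to [diam]. *)
Lemma cover_all_scales {A : set X} {b c : R} (diam : R) :
  box_dim rho A = b%:E -> 0 < c -> 0 < b + c ->
  exists K, 0 < K /\ forall s, 0 < s <= diam -> exists cs : seq X,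
    (size cs)%:R <= K * s `^ (- (b + c)) /\ A `<=` \bigcup_(z in [set` cs]) oball rho z s.
Proof.
move=> A_dim c0 beta0.
have [s0 [/andP[s00 s01] small]] := box_dim_small_cover A_dim c0.
have [|cs0 [_ cs0_cover]] := small (s0 / 2); first by apply/andP; split; lra.
set M := (size cs0)%:R : R; have M0 : 0 <= M by rewrite ler0n.
have MD0 : 0 <= M * diam `^ (b + c) by rewrite mulr_ge0 ?powR_ge0.
exists (1 + M * diam `^ (b + c)); split=> [|s /andP[s0' s_le]]; first lra.
have [s_lt|s_ge] := ltrP s s0.
  have [|cs [cs_size cs_cover]] := small s; first by apply/andP.
  exists cs; split => //; apply: le_trans (ltW cs_size) _.
  by rewrite ler_peMl ?powR_ge0 // lerDl.
exists cs0; split; last first.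
  by move=> y /cs0_cover [z z_in zy]; exists z => //; move: zy; rewrite /oball /=; lra.
have s_pow0 : 0 < s `^ (b + c) by apply: powR_gt0.
have s_pow_le : s `^ (b + c) <= diam `^ (b + c).
  by apply: ge0_ler_powR; rewrite ?nnegrE; lra.
have ratio_ge1 : 1 <= diam `^ (b + c) / s `^ (b + c) by rewrite ler_pdivlMr // mul1r.
rewrite powRN mulrDl mul1r -mulrA; apply: ler_wpDl; first by rewrite invr_ge0 ltW.
exact: ler_peMr.
Qed.

Section Labels.
Context {Y : Type} (eta : X -> Y).
Local Notation bd := (boundary rho eta).

Lemma boundary_of_label_changes_near z :
  (forall e, 0 < e -> exists y, eta y <> eta z /\ rho z y < e) -> bd z.
Proof.
move=> near; apply/le_anti/andP; split; last first.
  by apply: le_ereal_inf_tmp => _ [y _ <-]; rewrite lee_fin rho_ge0.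
apply/lee_addgt0Pr => e e0; rewrite add0e.
have [y [ny zy]] := near e e0.
apply: (@le_trans _ _ (rho z y)%:E); first by apply: ereal_inf_lbound; exists y.
by rewrite lee_fin ltW.
Qed.

Section ExitTime.
Context (g : R -> X).

Definition stay_times : set R :=
  [set t | 0 <= t <= 1 /\ forall s, 0 <= s <= t -> eta (g s) = eta (g 0)].

Definition exit_time : R := sup stay_times.

Lemma stay_times0 : stay_times 0.
Proof.
split; first by rewrite lexx ler01.
by move=> s /andP[s0 s0']; have -> : s = 0 by apply/le_anti; rewrite s0 s0'.
Qed.

Lemma has_sup_stay_times : has_sup stay_times.
Proof. by split; [exists 0; exact: stay_times0 | exists 1 => t [/andP[_ ?] _]]. Qed.

Lemma exit_time_ge0 : 0 <= exit_time.
Proof. exact: sup_upper_bound has_sup_stay_times _ stay_times0. Qed.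

Lemma exit_time_le1 : exit_time <= 1.
Proof. by apply: ge_sup; [exists 0; exact: stay_times0 | move=> t [/andP[_ ?] _]]. Qed.

Lemma label_before_exit s : 0 <= s < exit_time -> eta (g s) = eta (g 0).
Proof.
move=> /andP[s0 s_lt]; have eps0 : 0 < exit_time - s by rewrite subr_gt0.
have [t [_ stay_t] t_gt] := sup_adherent eps0 has_sup_stay_times.
by apply: stay_t; rewrite s0 /=; move: t_gt; rewrite -/exit_time; lra.
Qed.

Lemma label_change_before_exit : eta (g exit_time) <> eta (g 0) -> forall del, 0 < del ->
  exists u, [/\ 0 <= u <= 1, `|u - exit_time| < del & eta (g u) = eta (g 0)].
Proof.
move=> leave del del0; have exit_le1 := exit_time_le1.
have exit_gt0 : 0 < exit_time.
  rewrite lt_neqAle exit_time_ge0 andbT; apply/eqP => ts_eq0.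
  by apply: leave; rewrite -ts_eq0.
pose u := Num.max 0 (exit_time - del / 2).
have u0 : 0 <= u by rewrite le_max lexx.
have u_lt : u < exit_time by rewrite gt_max exit_gt0 /=; lra.
have u_ge : exit_time - del / 2 <= u by rewrite le_max lexx orbT.
exists u; split; last exact/label_before_exit/andP.
  by apply/andP; split => //; lra.
by rewrite ltr_norml; lra.
Qed.

Hypothesis g_change : eta (g 1) <> eta (g 0).

(* If the label at the exit time is still the initial one, it must change right after it,
   otherwise [exit_time] would not be the supremum of [stay_times]. *)
Lemma label_change_after_exit : eta (g exit_time) = eta (g 0) -> forall del, 0 < del ->
  exists u, [/\ 0 <= u <= 1, `|u - exit_time| < del & eta (g u) <> eta (g 0)].
Proof.
move=> stay del del0; have exit_ge0 := exit_time_ge0.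
have exit_lt1 : exit_time < 1.
  rewrite lt_neqAle exit_time_le1 andbT; apply/eqP => ts_eq1.
  by apply: g_change; rewrite -ts_eq1.
apply: boolp.contrapT => no_change.
pose t := Num.min (exit_time + del / 2) 1.
have t_ge : exit_time < t by rewrite lt_min exit_lt1 andbT; lra.
have t_le : t <= exit_time + del / 2 by rewrite ge_min lexx.
have t_le1 : t <= 1 by rewrite ge_min lexx orbT.
suff /(sup_upper_bound has_sup_stay_times) : stay_times t by rewrite -/exit_time; lra.
split=> [|s /andP[s0 st]]; first by apply/andP; split => //; lra.
case: (ltgtP s exit_time) => [s_lt|s_gt|->] //; first exact/label_before_exit/andP.
apply: boolp.contrapT => ns; apply: no_change; exists s; split => //.
  by apply/andP; split => //; lra.
by rewrite ltr_norml; lra.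
Qed.

Hypothesis g_path : is_path rho g.

Lemma exit_time_boundary : bd (g exit_time).
Proof.
apply: boundary_of_label_changes_near => e e0.
have exit01 : 0 <= exit_time <= 1 by rewrite exit_time_ge0 exit_time_le1.
have [del del0 g_cont] := g_path _ exit01 _ e0.
suff [u [u01 u_near u_label]] : exists u, [/\ 0 <= u <= 1, `|u - exit_time| < del
    & eta (g u) <> eta (g exit_time)].
  by exists (g u); split => //; rewrite rho_sym; apply: g_cont.
have [stay|leave] := boolp.pselect (eta (g exit_time) = eta (g 0)).
  by have [u [? ? ?]] := label_change_after_exit stay _ del0; exists u; rewrite stay.
have [u [? ? u_label]] := label_change_before_exit leave _ del0.
by exists u; split => //; rewrite u_label => /esym.
Qed.

End ExitTime.

Hypothesis rho_length : length_space rho.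

Lemma boundary_near x x' e : eta x' <> eta x -> 0 < e ->
  exists z, bd z /\ rho x z < rho x x' + e.
Proof.
move=> x'_label e0; have := rho_length x x'; set paths := (P in ereal_inf P) => inf_paths.
have : (ereal_inf paths < (rho x x' + e)%:E)%E by rewrite -inf_paths lte_fin ltrDl.
case/ereal_inf_lt => _ [g [g_path [g0 g1]] <-] short.
have g_change : eta (g 1) <> eta (g 0) by rewrite g0 g1.
exists (g (exit_time g)); split; first exact: exit_time_boundary.
rewrite -lte_fin; apply: le_lt_trans short; rewrite -g0; apply: path_length_ge.
by rewrite exit_time_ge0 exit_time_le1.
Qed.

Lemma margin_ge x s : (forall z, bd z -> s <= rho z x) -> (s%:E <= margin rho eta x)%E.
Proof.
move=> far; apply: le_ereal_inf_tmp => _ [x' x'_label <-]; rewrite lee_fin.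
apply/ler_addgt0Pr => e e0; have [z [bz xz]] := boundary_near _ _ _ x'_label e0.
by rewrite (le_trans (far z bz)) // rho_sym ltW.
Qed.

Definition ml_cell (w : X) (s : R) : set X :=
  [set x | rho w x < s / 4 /\ forall z, bd z -> s <= rho z x].

(* The cell has diameter at most [s / 2], while every point of it has margin at least [s]. *)
Lemma ml_cell_mutually_labeling w s : mutually_labeling rho eta (ml_cell w s).
Proof.
move=> x [wx far]; have s0 : 0 < s by have := rho_ge0 w x; lra.
apply: (@le_lt_trans _ _ (s / 2)%:E); last first.
  by apply: lt_le_trans (margin_ge _ _ far); rewrite lte_fin; lra.
apply: ge_ereal_sup => _ [[y y'] [[wy _] [wy' _]] <-] /=.
by rewrite lee_fin (le_trans (rho_tri y w y')) // rho_sym; lra.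
Qed.

Lemma N_ML_le_size (Us : seq (set X)) (V : set X) :
  (forall U, U \in Us -> mutually_labeling rho eta U) ->
  V `<=` \bigcup_(U in [set` Us]) U -> (N_ML rho eta V <= (size Us)%:R%:E)%E.
Proof.
move=> Us_ml V_sub; apply: ereal_inf_lbound; exists (size Us) => //.
exists (nth set0 Us); split=> [i i_lt|x /V_sub [U U_in Ux]].
  by apply/Us_ml/mem_nth.
by exists (index U Us); rewrite /= ?index_mem ?nth_index.
Qed.

Lemma boundary_other_label {z : X} : bd z -> exists x, eta x <> eta z.
Proof.
move=> bz; have : (margin rho eta z < 1%:E)%E by rewrite bz lte_fin ltr01.
by case/ereal_inf_lt => _ [x x_label _] _; exists x.
Qed.

Lemma dyadic_shell {z0 x : X} {r diam : R} {n : nat} :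
  bd z0 -> rho z0 x <= diam -> diam < 2 ^+ n * r -> (~` enlarge rho bd r) x ->
  exists k, (k < n)%N /\ [/\ 2 ^+ k * r <= diam, forall z, bd z -> 2 ^+ k * r <= rho z x
    & exists2 z, bd z & rho z x < 2 * (2 ^+ k * r)].
Proof.
move=> bz0 z0x diam_lt x_far.
pose P k := forall z, bd z -> 2 ^+ k * r <= rho z x.
have P0 : P 0%N.
  by move=> z bz; rewrite expr0 mul1r leNgt; apply/negP => zx; apply: x_far; exists z.
have Pn : ~ P n by move=> /(_ z0 bz0); lra.
have [k [k_lt [Pk Pk1]]] := find_last_level P0 Pn.
exists k; split => //; split => //; first exact: le_trans (Pk z0 bz0) z0x.
apply: boolp.contrapT => far; apply: Pk1 => z bz; rewrite leNgt exprS -mulrA.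
by apply/negP => zx; apply: far; exists z.
Qed.

Lemma N_ML_outside_enlarge_le {diam beta K : R} :
  (forall x y, rho x y <= diam) -> bd !=set0 -> 0 < beta -> 0 <= K ->
  (forall s, 0 < s <= diam -> exists ws : seq X, (size ws)%:R <= K * s `^ (- beta) /\
     forall x, (exists2 z, bd z & rho z x < 2 * s) -> exists2 w, w \in ws & rho w x < s / 4) ->
  forall r, 0 < r ->
  (N_ML rho eta (~` enlarge rho bd r) <= (K / (1 - 2 `^ (- beta)) * r `^ (- beta))%:E)%E.
Proof.
move=> rho_le [z0 bz0] beta0 K0 cells r r0.
have [n diam_lt] : exists n : nat, diam < 2 ^+ n * r.
  have diam_r0 : 0 <= diam / r.
    by apply: divr_ge0; [exact: le_trans (rho_ge0 z0 z0) (rho_le z0 z0) | exact: ltW].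
  exists (Num.Def.archi_bound (diam / r)); rewrite -ltr_pdivrMr //.
  by apply: lt_trans (archi_boundP diam_r0) _; rewrite -natrX ltr_nat ltn_expl.
have /boolp.choice [ws ws_spec] : forall k, exists ws : seq X,
    (size ws)%:R <= K * (2 ^+ k * r) `^ (- beta) /\
    (2 ^+ k * r <= diam -> forall x, (exists2 z, bd z & rho z x < 2 * (2 ^+ k * r)) ->
       exists2 w, w \in ws & rho w x < 2 ^+ k * r / 4).
  move=> k; have k_pos : 0 < 2 ^+ k * r by rewrite mulr_gt0 ?exprn_gt0.
  have [k_le|k_gt] := lerP (2 ^+ k * r) diam.
    have /cells [ws [ws_size ws_near]] : 0 < 2 ^+ k * r <= diam by rewrite k_pos k_le.
    by exists ws; split => // _.
  by exists [::]; split => [|?]; [rewrite /= mulr_ge0 ?powR_ge0 | lra].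
set Us := flatten [seq [seq ml_cell w (2 ^+ k * r) | w <- ws k] | k <- index_iota 0 n].
apply: le_trans (N_ML_le_size Us _ _ _) _.
- by move=> U /flatten_mapP [k _ /mapP [w _ ->]]; apply: ml_cell_mutually_labeling.
- move=> x x_far.
  have [k [k_lt [k_le far near]]] := dyadic_shell bz0 (rho_le z0 x) diam_lt x_far.
  have [w w_in wx] := (ws_spec k).2 k_le x near.
  exists (ml_cell w (2 ^+ k * r)); last by split.
  by apply/flatten_mapP; exists k; [rewrite mem_index_iota | apply: map_f].
rewrite lee_fin.
apply: le_trans (size_flatten_map_le _ (fun k => K * (2 ^+ k * r) `^ (- beta)) _ _) _.
  by move=> k; rewrite size_map; apply: (ws_spec k).1.
by rewrite -mulr_sumr [X in _ <= X]mulrAC -mulrA ler_wpM2l // sum_dyadic_powR_le.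
Qed.

End Labels.
End MetricSpace.

Theorem proposition4 (R : realType) (X : pointedType) (rho : X -> X -> R)
  (d diam : R)
  (nu : {finite_measure set (g_sigma_algebraType (rho_open_sets rho)) -> \bar R})
  (dY : measure_display) (Y : measurableType dY)
  (eta : g_sigma_algebraType (rho_open_sets rho) -> Y) (b : R) :
  is_metric rho ->
  length_space rho ->
  doubling rho d ->
  diameter rho = diam%:E ->
  measurable_fun setT eta ->
  nu (boundary rho eta) = 0%E ->
  boundary rho eta !=set0 ->
  box_dim rho (boundary rho eta) = b%:E ->
  forall c : R, 0 < c -> exists C : R, 0 < C /\
    forall r : R, 0 < r ->
      (N_ML rho eta (~` enlarge rho (boundary rho eta) r)
         <= (C * diam `^ (4 * d) * r `^ (- (b + c)))%:E)%E.
Proof.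
move=> rho_metric rho_length rho_doubling diam_eq _ _ bd_ne b_dim c c0.
have rho_le x y : rho x y <= diam := rho_le_diameter rho x y diam_eq.
have [z0 bz0] := bd_ne; have [x x_label] := boundary_other_label rho eta bz0.
have x_z0 : x <> z0 by move=> x_z0; apply: x_label; rewrite x_z0.
have diam0 : 0 < diam := diameter_gt0 rho rho_metric diam_eq x_z0.
have beta0 := box_dim_add_gt0 rho bd_ne b_dim c0.
have [K [K0 bd_cover]] := cover_all_scales rho diam b_dim c0 beta0.
set B := (2 `^ d) ^+ 4.
have B0 : 0 < B by rewrite exprn_gt0 ?powR_gt0.
have q1 := two_powRN_lt1 beta0.
exists (K * B / (1 - 2 `^ (- (b + c))) / diam `^ (4 * d)); split.
  by rewrite !divr_gt0 ?mulr_gt0 ?powR_gt0 // subr_gt0.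
move=> r r0; rewrite divfK ?gt_eqF ?powR_gt0 //.
apply: (N_ML_outside_enlarge_le rho rho_metric eta rho_length rho_le bd_ne beta0 _ _ _ r0).
  by rewrite mulr_ge0 // ltW.
move=> s /[dup] /andP[s0 _] /bd_cover [cs [cs_size cs_cover]].
have [ws [ws_size ws_near]] := shell_centers rho rho_metric rho_doubling s0 cs_cover.
exists ws; split => //; apply: le_trans ws_size _.
by rewrite mulrAC ler_wpM2r // ltW.
Qed.
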